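(* Consider a financial network with $n$ institutions and $m$ underlying assets with prices $\vec p=(p_1,\dots,p_m)\ge 0$, asset-holding matrix $D=(D_{ik})$ and cross-holding matrix $C=(C_{ij})$ as described in the context. If the cross-holding graph has no directed cycles, then for every institution $i$ the equity valuation satisfies $V_i\le \|\vec p\|_1$.
   Context: Model: there are $n$ financial institutions and $m$ underlying assets; asset $k$ has price $p_k\ge 0$. $D_{ik}\ge 0$ is the fraction of asset $k$ owned by institution $i$ (so $\sum_i D_{ik}\le 1$ for each $k$). $C=(C_{ij})$ is an $n\times n$ nonnegative matrix, $C_{ij}$ being the fraction of institution $j$ owned by institution $i$, with $C_{ii}=0$. The self-holding of institution $j$ is $\hat C_{jj}=1-\sum_i C_{ij}$, assumed to satisfy $\hat C_{jj}>0$; $\hat C$ is the diagonal matrix with these entries. The equity valuation is the vector $\vec V$ solving $\vec V=D\vec p+C\vec V$, i.e. $\vec V=(I-C)^{-1}D\vec p$, and the market valuation is $\vec v=\hat C\vec V=\hat C(I-C)^{-1}D\vec p$. The cross-holding graph is the directed graph on the institutions with an edge from $j$ to $i$ whenever $C_{ij}>0$. *)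

From HB Require Import structures.
From mathcomp Require Import all_boot all_order all_algebra.
Set Implicit Arguments. Unset Strict Implicit. Unset Printing Implicit Defensive.
Import Order.TTheory GRing.Theory Num.Theory.
Local Open Scope ring_scope.

Definition cross_edge (R : numDomainType) (n : nat) (C : 'M[R]_n) : rel 'I_n :=
  fun j i => 0 < C i j.

Definition acyclic_graph (n : nat) (e : rel 'I_n) : Prop :=
  forall s : seq 'I_n, s != [::] -> ~~ cycle e s.

Definition equity_valuation (R : realFieldType) (n m : nat)
  (C : 'M[R]_n) (D : 'M[R]_(n, m)) (p : 'cV[R]_m) : 'cV[R]_n :=
  invmx (1%:M - C) *m (D *m p).

Definition self_holding (R : numDomainType) (n : nat) (C : 'M[R]_n) (j : 'I_n) : R :=
  1 - \sum_(i < n) C i j.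

From HB Require Import structures.
From mathcomp Require Import all_boot all_order all_algebra.
Import Order.TTheory GRing.Theory Num.Theory.
Local Open Scope ring_scope.

(* Write N := (I - C)^{-1}, so that V = N D p and N = I + N C.  Since every
   column of C sums to less than 1, a row vector y with y <= y C outside a set
   of indices is bounded on all indices by its bound on that set (maximum
   principle).  This makes I - C invertible, and shows that N_il = 0 unless
   there is a path from l to i.  With no cycles through i this forces
   N_ii = 1, and then N_il <= 1 for all l.  Hence
   V_i = sum_l N_il (D p)_l <= sum_l (D p)_l <= sum_k p_k. *)

Section SubstochasticColumns.
Variables (R : realFieldType) (n : nat) (C : 'M[R]_n).
Hypothesis C_ge0 : forall i j : 'I_n, 0 <= C i j.
Hypothesis self_holding_gt0 : forall j : 'I_n, 0 < self_holding C j.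

Lemma max_principle (y : 'I_n -> R) (A : pred 'I_n) (M : R) :
  0 <= M ->
  (forall l, A l -> y l <= \sum_k y k * C k l) ->
  (forall l, ~~ A l -> y l <= M) ->
  forall l, y l <= M.
Proof.
move=> M_ge0 y_sub y_out l.
have [l0 _ y_max] := @arg_maxP _ _ _ l predT y isT.
apply: le_trans (y_max l isT) _.
have [Al0|] := boolP (A l0); last exact: y_out.
apply: le_trans M_ge0; rewrite leNgt; apply/negP => y_l0_gt0.
have col_lt1 : \sum_k C k l0 < 1.
  by have := self_holding_gt0 l0; rewrite /self_holding subr_gt0.
have : y l0 <= y l0 * \sum_k C k l0.
  apply: le_trans (y_sub l0 Al0) _; rewrite mulr_sumr.
  by apply: ler_sum => k _; apply: ler_wpM2r => //; exact: y_max.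
by rewrite ler_pMr // leNgt col_lt1.
Qed.

Lemma unitmx_1_sub : 1%:M - C \in unitmx.
Proof.
rewrite unitmxE unitfE; apply/negP => /det0P [v v_neq0 vA0].
have v_fix l : v 0 l = \sum_k v 0 k * C k l.
  move/matrixP: vA0 => /(_ 0 l).
  by rewrite mulmxBr mulmx1 !mxE => /eqP; rewrite subr_eq0 => /eqP.
have v_le0 := @max_principle (fun l => `|v 0 l|) predT 0 (lexx 0).
move/eqP: v_neq0; apply; apply/matrixP => a b; rewrite ord1 mxE.
apply/eqP; rewrite -normr_le0; apply: v_le0 => // l _.
rewrite v_fix; apply: le_trans (ler_norm_sum _ _ _) _.
by apply: ler_sum => k _; rewrite normrM (ger0_norm (C_ge0 k l)).
Qed.

Lemma invmx_1_sub_fix (i l : 'I_n) :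
  invmx (1%:M - C) i l = (i == l)%:R + \sum_k invmx (1%:M - C) i k * C k l.
Proof.
move/matrixP: (mulVmx unitmx_1_sub) => /(_ i l).
by rewrite mulmxBr mulmx1 !mxE => <-; rewrite subrK.
Qed.

Section Acyclic.
Hypothesis C_acyclic : acyclic_graph (cross_edge C).
Variable i : 'I_n.
Let N := invmx (1%:M - C).
Let reaches_i l := connect (cross_edge C) l i.

Lemma invmx_1_sub_unreachable l : ~~ reaches_i l -> N i l = 0.
Proof.
pose y k := if reaches_i k then 0 else `|N i k|.
have y_le0 : forall k, y k <= 0.
  apply: (@max_principle y [pred k | ~~ reaches_i k]) => // [k /= k_out|k].
    rewrite /y (negbTE k_out) invmx_1_sub_fix.
    have -> : (i == k) = false.
      by apply: contraNF k_out => /eqP <-; exact: connect0.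
    rewrite add0r; apply: le_trans (ler_norm_sum _ _ _) _.
    apply: ler_sum => j _; rewrite normrM (ger0_norm (C_ge0 j k)) /y.
    case: ifP => j_in; last by [].
    have [/lt_geF|C_gt0|->] := ltgtP (C j k) 0; first by rewrite C_ge0.
      by move: k_out; rewrite /reaches_i (connect_trans (connect1 C_gt0) j_in).
    by rewrite !mulr0.
  by rewrite negbK /y => ->.
move=> l_out; apply/eqP; rewrite -normr_le0.
by have := y_le0 l; rewrite /y (negbTE l_out).
Qed.

Lemma invmx_1_sub_diag : N i i = 1.
Proof.
rewrite invmx_1_sub_fix eqxx big1 ?addr0 // => k _.
have [k_in|k_out] := boolP (reaches_i k); last first.
  by rewrite invmx_1_sub_unreachable // mul0r.
have [/lt_geF|C_gt0|->] := ltgtP (C k i) 0; first by rewrite C_ge0.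
  case/connectP: k_in => q q_path q_last.
  case/negP: (C_acyclic (k :: q) isT) => /=.
  by rewrite rcons_path q_path -q_last.
by rewrite mulr0.
Qed.

Lemma invmx_1_sub_le1 l : N i l <= 1.
Proof.
apply: (@max_principle (N i) [pred k | k != i]) => // [k /= k_neq|k].
  by rewrite invmx_1_sub_fix eq_sym (negbTE k_neq) add0r.
by rewrite negbK => /eqP ->; rewrite invmx_1_sub_diag.
Qed.

End Acyclic.
End SubstochasticColumns.

Theorem lemma1 (R : realFieldType) (n m : nat)
  (C : 'M[R]_n) (D : 'M[R]_(n, m)) (p : 'cV[R]_m)
  (hp : forall k : 'I_m, 0 <= p k 0)
  (hD : forall (i : 'I_n) (k : 'I_m), 0 <= D i k)
  (hDsum : forall k : 'I_m, \sum_(i < n) D i k <= 1)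
  (hC : forall i j : 'I_n, 0 <= C i j)
  (hCdiag : forall i : 'I_n, C i i = 0)
  (hself : forall j : 'I_n, 0 < self_holding C j)
  (hacyc : acyclic_graph (cross_edge C)) :
  forall i : 'I_n, equity_valuation C D p i 0 <= \sum_(k < m) `|p k 0|.
Proof.
move=> i; rewrite /equity_valuation mulmxA mxE; apply: ler_sum => k _.
rewrite (ger0_norm (hp k)) -[leRHS]mul1r; apply: ler_wpM2r => //.
rewrite mxE; apply: le_trans (hDsum k); apply: ler_sum => l _.
by rewrite -[leRHS]mul1r; apply: ler_wpM2r => //; exact: invmx_1_sub_le1.
Qed.
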